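(* The lattice $K$ (defined in the context) has the following properties: (i) $K$ is infinite, generated by three elements, and $2$-modular; (ii) for every positive integer $h$, $K$ is $\mathbf{M}^h$-amenable, that is, $K\otimes L$ is a capped tensor product for every $h$-modular lattice $L$ with zero.
   Context: $K$ is the lattice consisting of $\varnothing$, $C=\{c\}$, $A_m=\{a_k:k\geq m\}$, $B_n=\{b_k:k\geq n\}$ ($m,n<\omega$), and the sets $C\cup A_m\cup B_n$ with $m,n<\omega$, $|m-n|\leq1$, all ordered by inclusion (here $c,a_n,b_n$ are distinct symbols); meets are intersections. For a lattice $L$, define $\langle x,y,z\rangle^{(1)}=\langle x\vee(y\wedge z),y\vee(x\wedge z),z\vee(x\wedge y)\rangle$ on $L^3$, $u^{(0)}=u$, $u^{(k+1)}=(u^{(k)})^{(1)}$; $L$ is $h$-modular if $u^{(h+1)}=u^{(h)}$ for all $u\in L^3$. Tensor products: for join-semilattices with zero $A,B$, a bi-ideal of $A\times B$ is a down-set containing $(A\times\{0\})\cup(\{0\}\times B)$ and closed under lateral joins (joins of pairs $\langle a_0,b_0\rangle,\langle a_1,b_1\rangle$ with $a_0=a_1$ or $b_0=b_1$); $A\otimes B$ is the join-semilattice of compact elements of the algebraic lattice of all bi-ideals. A bi-ideal $I$ is capped if there is a finite $\Gamma\subseteq A\times B$ such that $I$ is the down-set generated by $\Gamma\cup(A\times\{0\})\cup(\{0\}\times B)$; $A\otimes B$ is a capped tensor product if all its elements are capped. *)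

From HB Require Import structures.
From mathcomp Require Import all_boot all_order.
From mathcomp Require Import zify.
From Stdlib Require Import List.

Set Implicit Arguments.
Unset Strict Implicit.
Unset Printing Implicit Defensive.

Import Order.TTheory.

Section LatticeNotions.
Variables (T : Type) (meet join : T -> T -> T).

Definition hstep (u : T * T * T) : T * T * T :=
  let: (x, y, z) := u in
  (join x (meet y z), join y (meet x z), join z (meet x y)).

Definition hiter (k : nat) (u : T * T * T) : T * T * T := iter k hstep u.

Definition hmodular (h : nat) : Prop :=
  forall u : T * T * T, hiter h.+1 u = hiter h u.

Definition generates3 (x y z : T) : Prop :=
  forall S : T -> Prop, S x -> S y -> S z ->
    (forall a b, S a -> S b -> S (meet a b)) ->
    (forall a b, S a -> S b -> S (join a b)) ->
    forall t, S t.

Definition generated_by_three : Prop := exists x y z, generates3 x y z.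

End LatticeNotions.

Definition infinite_type (T : Type) : Prop :=
  ~ exists s : list T, forall x : T, In x s.

Section Tensor.
Variables (A B : Type).
Variables (leA : A -> A -> Prop) (joinA : A -> A -> A) (zeroA : A).
Variables (leB : B -> B -> Prop) (joinB : B -> B -> B) (zeroB : B).

Definition biideal (I : A * B -> Prop) : Prop :=
  [/\ (forall p q : A * B, I q -> leA p.1 q.1 -> leB p.2 q.2 -> I p),
      (forall a : A, I (a, zeroB)),
      (forall b : B, I (zeroA, b)),
      (forall (a : A) (b0 b1 : B), I (a, b0) -> I (a, b1) -> I (a, joinB b0 b1)) &
      (forall (a0 a1 : A) (b : B), I (a0, b) -> I (a1, b) -> I (joinA a0 a1, b))].

(* the bi-ideal generated by X (the join of a family of bi-ideals in the
   lattice of bi-ideals is the bi-ideal generated by their union) *)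
Definition bigen (X : A * B -> Prop) (p : A * B) : Prop :=
  forall I, biideal I -> (forall q, X q -> I q) -> I p.

Definition compact_biideal (I : A * B -> Prop) : Prop :=
  biideal I /\
  forall S : (A * B -> Prop) -> Prop,
    (forall J, S J -> biideal J) ->
    (forall p, I p -> bigen (fun q => exists J, S J /\ J q) p) ->
    exists s : list (A * B -> Prop),
      (forall J, In J s -> S J) /\
      (forall p, I p -> bigen (fun q => exists J, In J s /\ J q) p).

Definition capped (I : A * B -> Prop) : Prop :=
  exists Gamma : list (A * B),
    forall p : A * B,
      I p <-> exists q : A * B,
        (In q Gamma \/ q.2 = zeroB \/ q.1 = zeroA) /\ leA p.1 q.1 /\ leB p.2 q.2.

(* A (x) B (the compact bi-ideals) is a capped tensor product *)
Definition capped_tensor : Prop :=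
  forall I, compact_biideal I -> capped I.

End Tensor.

Inductive Sym : Type := sc | sa of nat | sb of nat.

Definition symC (s : Sym) : bool := if s is sc then true else false.
Definition symA (m : nat) (s : Sym) : bool := if s is sa k then m <= k else false.
Definition symB (n : nat) (s : Sym) : bool := if s is sb k then n <= k else false.
Definition symT (m n : nat) (s : Sym) : bool := [|| symC s, symA m s | symB n s].

(* Elements of K.  The sets C u A_m u B_n with |m - n| <= 1 are coded by
   KT0 m (n = m), KTA m (n = m + 1), KTB n (m = n + 1); every element of K
   has exactly one code. *)
Inductive K : Type :=
| K0
| KC
| KA of nat
| KB of nat
| KT0 of nat
| KTA of nat
| KTB of nat.

Definition Kset (x : K) : Sym -> bool :=
  match x with
  | K0 => fun _ => false
  | KC => symC
  | KA m => symA m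
  | KB n => symB n
  | KT0 m => symT m m
  | KTA m => symT m m.+1
  | KTB n => symT n.+1 n
  end.

Definition Kle (x y : K) : Prop := forall s, Kset x s -> Kset y s.

(* computational description used to define meet and join:
   (contains c?, least index of an a_k or None, least index of a b_k or None) *)
Definition Kdec (x : K) : bool * option nat * option nat :=
  match x with
  | K0 => (false, None, None)
  | KC => (true, None, None)
  | KA m => (false, Some m, None)
  | KB n => (false, None, Some n)
  | KT0 m => (true, Some m, Some m)
  | KTA m => (true, Some m, Some m.+1)
  | KTB n => (true, Some n.+1, Some n)
  end.

Definition Tcode (m n : nat) : K :=
  if n == m.+1 then KTA m else if m == n.+1 then KTB n else KT0 m.

(* least element of K containing the set described by (c, i, j) *)
Definition Kclose (d : bool * option nat * option nat) : K :=
  match d with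
  | (false, None, None) => K0
  | (true, None, None) => KC
  | (false, Some m, None) => KA m
  | (false, None, Some n) => KB n
  | (true, Some m, None) => KTA m
  | (true, None, Some n) => KTB n
  | (_, Some m, Some n) => Tcode (minn m n.+1) (minn n m.+1)
  end.

Definition omax (i j : option nat) : option nat :=
  match i, j with Some m, Some n => Some (maxn m n) | _, _ => None end.
Definition omin (i j : option nat) : option nat :=
  match i, j with
  | Some m, Some n => Some (minn m n)
  | Some m, None => Some m
  | None, o => o
  end.

Definition Kmeet (x y : K) : K :=
  let: (c, i, j) := Kdec x in let: (c', i', j') := Kdec y in
  Kclose (c && c', omax i i', omax j j').
Definition Kjoin (x y : K) : K :=
  let: (c, i, j) := Kdec x in let: (c', i', j') := Kdec y in
  Kclose (c || c', omin i i', omin j j').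

Definition osub (i j : option nat) : bool :=
  match i, j with
  | _, None => true
  | Some a, Some b => a <= b
  | None, Some _ => false
  end.

Definition Kleb (x y : K) : bool :=
  let: (c, i, j) := Kdec x in let: (c', i', j') := Kdec y in
  [&& c ==> c', osub i' i & osub j' j].

Ltac kfin := rewrite /= ?/Kleb /= /symT /symA /symB /symC /= ?orbF ?orbT ?andbF ?andbT ?orFb //=;
  try (apply/idP/idP; lia); try lia.

Lemma Kmeet_spec x y s : Kset (Kmeet x y) s = Kset x s && Kset y s.
Proof.
case: x => [||m|m|m|m|m]; case: y => [||n|n|n|n|n]; case: s => [|k|k];
  rewrite /Kmeet /= /Kclose /Tcode /=;
  repeat (case: eqP => /=; try move=> ?); kfin.
Qed.

Lemma Kle_dec x y : Kle x y <-> Kleb x y.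
Proof.
split.
- move=> H; case: x H => [||m|m|m|m|m] H.
  + by case: y H.
  + by move: (H sc); clear H; case: y => //= [|n|n] /(_ isT).
  + move: (H (sa m)); clear H; case: y => //= n; kfin.
  + move: (H (sb m)); clear H; case: y => //= n; kfin.
  + move: (H sc) (H (sa m)) (H (sb m)); clear H; case: y => //= n; kfin.
  + move: (H sc) (H (sa m)) (H (sb m.+1)); clear H; case: y => //= n; kfin.
  + move: (H sc) (H (sa m.+1)) (H (sb m)); clear H; case: y => //= n; kfin.
- case: x => [||m|m|m|m|m]; case: y => [||n|n|n|n|n] //= H; case=> [|k|k] //=; move: H; kfin.
Qed.

Lemma Kjoin_ubl x y : Kle x (Kjoin x y).
Proof.
apply/Kle_dec.
case: x => [||m|m|m|m|m]; case: y => [||n|n|n|n|n];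
  rewrite /Kjoin /= /Kclose /Tcode /=;
  repeat (case: eqP => /=; try move=> ?); kfin.
Qed.
Lemma Kjoin_ubr x y : Kle y (Kjoin x y).
Proof.
apply/Kle_dec.
case: x => [||m|m|m|m|m]; case: y => [||n|n|n|n|n];
  rewrite /Kjoin /= /Kclose /Tcode /=;
  repeat (case: eqP => /=; try move=> ?); kfin.
Qed.
Lemma Kjoin_least x y z : Kle x z -> Kle y z -> Kle (Kjoin x y) z.
Proof.
move=> /Kle_dec Hx /Kle_dec Hy; apply/Kle_dec; move: Hx Hy.
case: x => [||m|m|m|m|m]; case: y => [||n|n|n|n|n]; case: z => [||p|p|p|p|p];
  rewrite /Kjoin /= /Kclose /Tcode /=;
  repeat (case: eqP => /=; try move=> ?); kfin.
Qed.

(* For 2-modularity, record for each element of K which of the three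
   "components" C, A, B it meets: this is a lattice morphism onto the five-element modular
   lattice M3, so after one step of u |-> u^(1) the triple of shapes is fixed, and a direct
   computation shows that on triples with fixed shapes one more step reaches a fixed point.

   For amenability, a compact bi-ideal I of K (x) L is generated by finitely many pairs, whose
   K-components involve only indices at most N.  For a symbol s let P(s) be the join of the
   L-components of the generators whose K-component contains s.  Iterating the step map h times
   from (P(a_N), P(b_N), P(c)) gives a fixed point with third component z, and (C, z) lies in I.
   Putting x_0 = P(a_0), y_0 = P(b_0) and
     x_(n+1) = x_n v (y_n ^ z) v P(a_(n+1)),   y_(n+1) = y_n v (x_n ^ z) v P(b_(n+1)),
   the triples (x_n, y_n, z) follow the step map once n >= N, so by h-modularity they are
   stationary from N + h on.  The pairs (k, b) with b below x_n for a_n in k, below y_n for b_n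
   in k and below z if c is in k form a bi-ideal containing the generators and contained in I,
   hence equal to I; and it is capped by the pairs (k, meet of these bounds) with k of index at
   most N + h. *)

From HB Require Import structures.
From mathcomp Require Import all_boot all_order.
From mathcomp Require Import zify.
From Stdlib Require Import List.

Set Implicit Arguments.
Unset Strict Implicit.
Unset Printing Implicit Defensive.

Import Order.TTheory.

Section HIteration.
Variables (T : Type) (meet join : T -> T -> T).
Local Notation hstep := (hstep meet join).
Local Notation hiter := (hiter meet join).

Lemma hstepE x y z : hstep (x, y, z) = (join x (meet y z), join y (meet x z), join z (meet x y)).
Proof. by []. Qed.

Lemma hiterS k u : hiter k.+1 u = hstep (hiter k u).
Proof. by []. Qed.

Lemma hiter_hmodular h k u : hmodular meet join h -> hiter (h + k) u = hiter h u.
Proof.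
move=> hmod; elim: k => [|k IHk]; first by rewrite addn0.
by rewrite addnS hiterS IHk -hiterS hmod.
Qed.

End HIteration.

Section LatticeHIteration.
Variables (disp : Order.disp_t) (L : latticeType disp).
Local Notation hstep := (hstep (@Order.meet disp L) (@Order.join disp L)).
Local Notation hiter := (hiter (@Order.meet disp L) (@Order.join disp L)).

Lemma hiter_ge k u :
  [/\ u.1.1 <= (hiter k u).1.1, u.1.2 <= (hiter k u).1.2 & u.2 <= (hiter k u).2]%O.
Proof.
elim: k => [|k]; first by rewrite !lexx.
rewrite hiterS; case: (hiter k u) => [[x y] z] /= [ux uy uz].
by split; apply: lexUl.
Qed.

Lemma hstep_fixed x y z :
  hstep (x, y, z) = (x, y, z) -> [/\ y `&` z <= x, x `&` z <= y & x `&` y <= z]%O.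
Proof. by case=> /join_idPl-> /join_idPl-> /join_idPl->. Qed.

End LatticeHIteration.

(** * K through its descriptions, and 2-modularity *)

Inductive M3 := M3bot | M3c | M3a | M3b | M3top.

Definition M3meet (x y : M3) : M3 :=
  match x, y with
  | M3top, z | z, M3top => z
  | M3c, M3c => M3c | M3a, M3a => M3a | M3b, M3b => M3b
  | _, _ => M3bot
  end.

Definition M3join (x y : M3) : M3 :=
  match x, y with
  | M3bot, z | z, M3bot => z
  | M3c, M3c => M3c | M3a, M3a => M3a | M3b, M3b => M3b
  | _, _ => M3top
  end.

Lemma M3_modular : hmodular M3meet M3join 1.
Proof. by case=> [[[] []] []]. Qed.

Definition desc := (bool * option nat * option nat)%type.

Definition desc_set (d : desc) (s : Sym) : bool :=
  let: (c, i, j) := d in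
  match s with
  | sc => c
  | sa p => if i is Some m then m <= p else false
  | sb p => if j is Some n then n <= p else false
  end.

Definition desc_union (d d' : desc) : desc :=
  let: (c, i, j) := d in let: (c', i', j') := d' in (c || c', omin i i', omin j j').

Definition desc_inter (d d' : desc) : desc :=
  let: (c, i, j) := d in let: (c', i', j') := d' in (c && c', omax i i', omax j j').

Definition desc_close_def (d : desc) : desc :=
  let: (c, i, j) := d in
  match i, j with
  | Some m, Some n => (true, Some (minn m n.+1), Some (minn n m.+1))
  | Some m, None => if c then (true, Some m, Some m.+1) else d
  | None, Some n => if c then (true, Some n.+1, Some n) else d
  | None, None => d
  end.
(* Locked, so that case analyses unfold it only through the equations below;
   [desc_close_id] keeps the arithmetic of the brute-force proofs small. *)
Fact desc_close_key : unit. Proof. by []. Qed.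
Definition desc_close := locked_with desc_close_key desc_close_def.
Canonical desc_close_unlockable := [unlockable fun desc_close].

Lemma desc_close_id m n : m <= n.+1 -> n <= m.+1 ->
  desc_close (true, Some m, Some n) = (true, Some m, Some n).
Proof. by rewrite unlock /= => *; congr (_, Some _, Some _); lia. Qed.
Lemma desc_close_SS c m n :
  desc_close (c, Some m, Some n) = (true, Some (minn m n.+1), Some (minn n m.+1)).
Proof. by rewrite unlock. Qed.
Lemma desc_close_TSN m : desc_close (true, Some m, None) = (true, Some m, Some m.+1).
Proof. by rewrite unlock. Qed.
Lemma desc_close_TNS n : desc_close (true, None, Some n) = (true, Some n.+1, Some n).
Proof. by rewrite unlock. Qed.
Lemma desc_close_FSN m : desc_close (false, Some m, None) = (false, Some m, None).
Proof. by rewrite unlock. Qed.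
Lemma desc_close_FNS n : desc_close (false, None, Some n) = (false, None, Some n).
Proof. by rewrite unlock. Qed.
Lemma desc_close_NN c : desc_close (c, None, None) = (c, None, None).
Proof. by rewrite unlock. Qed.

Local Ltac desc_close_step :=
  first [ rewrite desc_close_id; [|lia|lia] | rewrite desc_close_SS | rewrite desc_close_TSN
        | rewrite desc_close_TNS | rewrite desc_close_FSN | rewrite desc_close_FNS
        | rewrite desc_close_NN ]; rewrite /=.

Lemma Kset_desc x s : Kset x s = desc_set (Kdec x) s.
Proof.
by case: x => [||m|m|m|m|m]; case: s => [|p|p] //=; rewrite /symT /symA /symB /symC /=; lia.
Qed.

Lemma desc_set_union d d' s : desc_set (desc_union d d') s = desc_set d s || desc_set d' s.
Proof.
by case: d => [[c [m|]] [n|]]; case: d' => [[c' [m'|]] [n'|]]; case: s => [|p|p] //=;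
  rewrite ?orbF //; lia.
Qed.

Lemma Kdec_Kclose d : Kdec (Kclose d) = desc_close d.
Proof.
case: d => [[[] [m|]] [n|]]; rewrite unlock //= /Tcode;
  case: eqP => [->|?] /=; try case: eqP => [->|?] /=; congr (_, Some _, Some _); lia.
Qed.

Lemma Kdec_join x y : Kdec (Kjoin x y) = desc_close (desc_union (Kdec x) (Kdec y)).
Proof.
by rewrite /Kjoin; case: (Kdec x) => [[? ?] ?]; case: (Kdec y) => [[? ?] ?]; apply: Kdec_Kclose.
Qed.

Lemma Kdec_meet x y : Kdec (Kmeet x y) = desc_close (desc_inter (Kdec x) (Kdec y)).
Proof.
by rewrite /Kmeet; case: (Kdec x) => [[? ?] ?]; case: (Kdec y) => [[? ?] ?]; apply: Kdec_Kclose.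
Qed.

Lemma Kle_refl x : Kle x x.
Proof. by []. Qed.
(* [Kle x x] unfolds to a product, which would otherwise make [x] implicit. *)
Arguments Kle_refl : clear implicits.

Lemma Kle_anti x y : Kle x y -> Kle y x -> x = y.
Proof.
move=> /Kle_dec + /Kle_dec.
by case: x => [||m|m|m|m|m]; case: y => [||n|n|n|n|n]; rewrite /Kleb //= => *;
  first [lia | f_equal; lia].
Qed.

Lemma Kjoin_l x y : Kle y x -> Kjoin x y = x.
Proof. by move=> yx; apply: Kle_anti; [apply: Kjoin_least | apply: Kjoin_ubl]. Qed.

Definition Kshape (x : K) : M3 :=
  match x with
  | K0 => M3bot | KC => M3c | KA _ => M3a | KB _ => M3b
  | KT0 _ | KTA _ | KTB _ => M3top
  end.

Variant Kdec_spec : K -> desc -> M3 -> Type :=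
  | KdecK0 : Kdec_spec K0 (false, None, None) M3bot
  | KdecKC : Kdec_spec KC (true, None, None) M3c
  | KdecKA m : Kdec_spec (KA m) (false, Some m, None) M3a
  | KdecKB n : Kdec_spec (KB n) (false, None, Some n) M3b
  | KdecKT x m n of m <= n.+1 & n <= m.+1 : Kdec_spec x (true, Some m, Some n) M3top.

Lemma KdecP x : Kdec_spec x (Kdec x) (Kshape x).
Proof. by case: x => [||m|m|m|m|m]; constructor; lia. Qed.

Lemma Kshape_Tcode m n : Kshape (Tcode m n) = M3top.
Proof. by rewrite /Tcode; case: (_ == _) => //; case: (_ == _). Qed.

Lemma Kshape_join x y : Kshape (Kjoin x y) = M3join (Kshape x) (Kshape y).
Proof. by case: x => [||m|m|m|m|m]; case: y => [||n|n|n|n|n]; rewrite /Kjoin //= Kshape_Tcode. Qed.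

Lemma Kshape_meet x y : Kshape (Kmeet x y) = M3meet (Kshape x) (Kshape y).
Proof. by case: x => [||m|m|m|m|m]; case: y => [||n|n|n|n|n]; rewrite /Kmeet //= Kshape_Tcode. Qed.

Definition Kshape3 (u : K * K * K) : M3 * M3 * M3 :=
  let: (x, y, z) := u in (Kshape x, Kshape y, Kshape z).

Lemma Kshape3_hstep u : Kshape3 (hstep Kmeet Kjoin u) = hstep M3meet M3join (Kshape3 u).
Proof. by case: u => [[x y] z]; rewrite /= !(Kshape_join, Kshape_meet). Qed.

Lemma hstep_idem_of_shape u :
  hstep M3meet M3join (Kshape3 u) = Kshape3 u ->
  hstep Kmeet Kjoin (hstep Kmeet Kjoin u) = hstep Kmeet Kjoin u.
Proof.
case: u => [[x y] z] fixed; rewrite [hstep _ _ (_, _, _)]/=.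
set x1 := Kjoin x _; set y1 := Kjoin y _; set z1 := Kjoin z _.
suff /and3P[/Kle_dec ? /Kle_dec ? /Kle_dec ?] :
    [&& Kleb (Kmeet y1 z1) x1, Kleb (Kmeet x1 z1) y1 & Kleb (Kmeet x1 y1) z1].
  by rewrite /= !Kjoin_l.
rewrite /Kleb {}/x1 {}/y1 {}/z1 !(Kdec_meet, Kdec_join); move: fixed => /=.
by case: KdecP => [||a|a|_ a a' ? ?]; case: KdecP => [||b|b|_ b b' ? ?];
  case: KdecP => [||c|c|_ c c' ? ?] //= _;
  repeat desc_close_step; repeat (apply/andP; split); lia.
Qed.

Lemma K_2modular : hmodular Kmeet Kjoin 2.
Proof.
move=> u; apply: hstep_idem_of_shape.
by rewrite !Kshape3_hstep; apply: M3_modular.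
Qed.

Lemma K_generated_by_three : generated_by_three Kmeet Kjoin.
Proof.
exists KC, (KA 0), (KB 0) => S SC SA SB Smeet Sjoin.
have SAB m : S (KA m) /\ S (KB m).
  elim: m => [|m [SAm SBm]]; first by [].
  have -> : KA m.+1 = Kmeet (KA 0) (Kjoin KC (KB m)) by rewrite /Kmeet /= max0n.
  have -> : KB m.+1 = Kmeet (KB 0) (Kjoin KC (KA m)) by rewrite /Kmeet /= max0n.
  by split; apply: Smeet => //; apply: Sjoin.
case=> [||m|m|m|m|m].
- by have -> : K0 = Kmeet (KA 0) (KB 0) by []; apply: Smeet.
- exact: SC.
- exact: (SAB m).1.
- exact: (SAB m).2.
- have -> : KT0 m = Kjoin (KA m) (KB m).
    by apply: Kle_anti; apply/Kle_dec; rewrite /Kleb Kdec_join desc_close_SS /=; lia.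
  by apply: Sjoin; [apply: (SAB m).1 | apply: (SAB m).2].
- by have -> : KTA m = Kjoin KC (KA m) by []; apply: Sjoin => //; apply: (SAB m).1.
- by have -> : KTB m = Kjoin KC (KB m) by []; apply: Sjoin => //; apply: (SAB m).2.
Qed.

Lemma In_ub (T : Type) (f : T -> nat) (s : list T) : exists N, forall x, In x s -> f x <= N.
Proof.
elim: s => [|x s [N IH]]; first by exists 0.
by exists (maxn (f x) N) => y /= [<-|/IH]; lia.
Qed.

Definition Kindex (x : K) : nat :=
  match x with
  | K0 | KC => 0
  | KA m | KB m | KT0 m => m
  | KTA m | KTB m => m.+1
  end.

Lemma K_infinite : infinite_type K.
Proof.
case=> s covers; have [N le_N] := In_ub Kindex s.
by have /= := le_N _ (covers (KA N.+1)); lia.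
Qed.

Definition Ksym (s : Sym) : K :=
  match s with sc => KC | sa m => KA m | sb n => KB n end.

Lemma Ksym_le x s : Kset x s -> Kle (Ksym s) x.
Proof.
by rewrite !Kset_desc => xs t; rewrite !Kset_desc;
  case: x xs => [||m|m|m|m|m]; case: s => [|p|p]; case: t => [|q|q] //=; lia.
Qed.

Lemma Kset_index_sa x p q : Kindex x <= q -> Kset x (sa p) -> Kset x (sa q).
Proof. by rewrite !Kset_desc; case: x => [||m|m|m|m|m] //=; lia. Qed.

Lemma Kset_index_sb x p q : Kindex x <= q -> Kset x (sb p) -> Kset x (sb q).
Proof. by rewrite !Kset_desc; case: x => [||m|m|m|m|m] //=; lia. Qed.

Lemma KA_le_KA m p : m <= p -> Kle (KA p) (KA m).
Proof. by move=> le_mp s; rewrite !Kset_desc; case: s => //= q; lia. Qed.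

Lemma KB_le_KB m p : m <= p -> Kle (KB p) (KB m).
Proof. by move=> le_mp s; rewrite !Kset_desc; case: s => //= q; lia. Qed.

Lemma KA_le_KB_KC n p : n < p -> Kle (KA p) (Kjoin (KB n) KC).
Proof. by move=> lt_np s; rewrite !Kset_desc; case: s => //= q; lia. Qed.

Lemma KB_le_KA_KC m p : m < p -> Kle (KB p) (Kjoin (KA m) KC).
Proof. by move=> lt_mp s; rewrite !Kset_desc; case: s => //= q; lia. Qed.

Lemma KC_le_KA_KB m n : Kle KC (Kjoin (KA m) (KB n)).
Proof. by case=> // _; rewrite Kset_desc Kdec_join desc_close_SS. Qed.

Lemma Kle_join3 x : x <> K0 -> exists s1 s2 s3,
  [/\ Kset x s1, Kset x s2, Kset x s3 & Kle x (Kjoin (Ksym s1) (Kjoin (Ksym s2) (Ksym s3)))].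
Proof.
case: x => [||m|m|m|m|m] // _;
  [ exists sc, sc, sc | exists (sa m), (sa m), (sa m) | exists (sb m), (sb m), (sb m)
  | exists sc, (sa m), (sb m) | exists sc, (sa m), (sb m.+1) | exists sc, (sa m.+1), (sb m) ];
  rewrite !Kset_desc /=; split => //; apply/Kle_dec;
  rewrite /Kleb !Kdec_join /=; repeat desc_close_step; lia.
Qed.

Definition Kclamp (M : nat) (x : K) : K :=
  match x with
  | K0 => K0
  | KC => KC
  | KA m => KA (minn m M)
  | KB n => KB (minn n M)
  | KT0 m => KT0 (minn m M)
  | KTA m => KTA (minn m M)
  | KTB n => KTB (minn n M)
  end.

Definition Klist (M : nat) : list K :=
  KC :: flat_map (fun m => [:: KA m; KB m; KT0 m; KTA m; KTB m]) (List.seq 0 M.+1).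

Lemma Kle_clamp M x : Kle x (Kclamp M x).
Proof. by move=> s; rewrite !Kset_desc; case: x => [||m|m|m|m|m]; case: s => [|p|p] //=; lia. Qed.

Lemma In_clamp M x : x <> K0 -> In (Kclamp M x) (Klist M).
Proof.
case: x => [||m|m|m|m|m] // _; [by left | right; apply/in_flat_map; exists (minn m M);
  (split; [apply/in_seq; lia | rewrite /=; tauto])..].
Qed.

Section KsetJoinClosed.
Variable U : Sym -> Prop.
Hypothesis U_succA : forall m, U (sa m) -> U (sa m.+1).
Hypothesis U_succB : forall n, U (sb n) -> U (sb n.+1).
Hypothesis U_AB : forall m n, U (sa m) -> U (sb n) -> U sc.
Hypothesis U_CB : forall n, U sc -> U (sb n) -> U (sa n.+1).
Hypothesis U_CA : forall m, U sc -> U (sa m) -> U (sb m.+1).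

Lemma U_upA m p : m <= p -> U (sa m) -> U (sa p).
Proof. by move=> /subnK <- Um; elim: (p - m) => //= k; rewrite addSn; apply: U_succA. Qed.

Lemma U_upB m p : m <= p -> U (sb m) -> U (sb p).
Proof. by move=> /subnK <- Um; elim: (p - m) => //= k; rewrite addSn; apply: U_succB. Qed.

Lemma desc_close_sub d :
  (forall s, desc_set d s -> U s) -> forall s, desc_set (desc_close d) s -> U s.
Proof.
case: d => [[c [m|]] [n|]] sub; rewrite unlock //=.
- have Um : U (sa m) by apply: (sub (sa m)) => /=.
  have Un : U (sb n) by apply: (sub (sb n)) => /=.
  have Uc := U_AB Um Un.
  case=> [|p|p] //=; rewrite /minn; case: ltnP => _ lep.
  + exact: U_upA lep Um.
  + exact: U_upA lep (U_CB Uc Un).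
  + exact: U_upB lep Un.
  + exact: U_upB lep (U_CA Uc Um).
- case: c sub => sub //; have Uc : U sc by apply: (sub sc).
  have Um : U (sa m) by apply: (sub (sa m)) => /=.
  by case=> [|p|p] //= lep; [apply: U_upA lep Um | apply: U_upB lep (U_CA Uc Um)].
- case: c sub => sub //; have Uc : U sc by apply: (sub sc).
  have Un : U (sb n) by apply: (sub (sb n)) => /=.
  by case=> [|p|p] //= lep; [apply: U_upA lep (U_CB Uc Un) | apply: U_upB lep Un].
Qed.

Lemma Kset_join_sub x y : (forall s, Kset x s -> U s) -> (forall s, Kset y s -> U s) ->
  forall s, Kset (Kjoin x y) s -> U s.
Proof.
move=> xU yU s; rewrite Kset_desc Kdec_join; apply: desc_close_sub => t.
by rewrite desc_set_union -!Kset_desc => /orP[/xU | /yU].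
Qed.

End KsetJoinClosed.

(** * Bi-ideals *)

Section BiIdeals.
Variables (A B : Type) (leA : A -> A -> Prop) (joinA : A -> A -> A) (zeroA : A).
Variables (leB : B -> B -> Prop) (joinB : B -> B -> B) (zeroB : B).
Local Notation biideal := (biideal leA joinA zeroA leB joinB zeroB).
Local Notation bigen := (bigen leA joinA zeroA leB joinB zeroB).

Lemma bigen_biideal X : biideal (bigen X).
Proof.
split.
- move=> p q Xq le1 le2 J Jbi XJ; have Jq := Xq J Jbi XJ.
  by case: Jbi => down *; apply: down Jq le1 le2.
- by move=> a J [].
- by move=> b J [].
- move=> a b0 b1 X0 X1 J Jbi XJ; have [J0 J1] := (X0 J Jbi XJ, X1 J Jbi XJ).
  by case: Jbi => _ _ _ joinJ _; apply: joinJ.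
- move=> a0 a1 b X0 X1 J Jbi XJ; have [J0 J1] := (X0 J Jbi XJ, X1 J Jbi XJ).
  by case: Jbi => _ _ _ _ joinJ; apply: joinJ.
Qed.

Lemma sub_bigen (X : A * B -> Prop) p : X p -> bigen X p.
Proof. by move=> Xp J _; apply. Qed.

Lemma bigen_sub_bigen X Y p : (forall q, X q -> bigen Y q) -> bigen X p -> bigen Y p.
Proof. by move=> XY; apply; [apply: bigen_biideal | apply: XY]. Qed.

Lemma compact_biideal_fg I : compact_biideal leA joinA zeroA leB joinB zeroB I ->
  exists P : list (A * B), (forall p, In p P -> I p) /\ (forall p, I p -> bigen (fun q => In q P) p).
Proof.
case=> Ibi compact.
pose S J := exists2 p, I p & J = bigen (eq p).
have [|p Ip|s [sS Is]] := compact S; first by move=> J [p _ ->]; apply: bigen_biideal.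
  by apply: sub_bigen; exists (bigen (eq p)); split; [exists p | apply: sub_bigen].
have [P [PI sP]] : exists P : list (A * B),
    (forall p, In p P -> I p) /\ (forall J q, In J s -> J q -> bigen (fun q => In q P) q).
  elim: s sS {Is} => [|J s IH] sS; first by exists nil.
  have [P [PI sP]] := IH (fun J' sJ' => sS J' (or_intror sJ')).
  have [p Ip ->] := sS J (or_introl erefl).
  exists (p :: P); split=> [q [<-|/PI]|J' q [<-|sJ'] J'q] //.
    by apply: bigen_sub_bigen J'q => _ <-; apply: sub_bigen; left.
  by apply: bigen_sub_bigen (sP J' q sJ' J'q) => q' Pq'; apply: sub_bigen; right.
by exists P; split=> // p Ip; apply: bigen_sub_bigen (Is p Ip) => q [J [sJ Jq]]; apply: sP sJ Jq.
Qed.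

End BiIdeals.

(** * Compact bi-ideals of K (x) L are capped *)

Section KTensor.
Variables (disp : Order.disp_t) (L : bLatticeType disp).
Local Notation leL := (fun x y : L => is_true (x <= y)%O).
Local Notation biideal := (biideal Kle Kjoin K0 leL (@Order.join disp L) \bot%O).

Section Valuation.
Variable val : Sym -> L.
Hypothesis val_succA : forall m, (val (sa m) <= val (sa m.+1))%O.
Hypothesis val_succB : forall n, (val (sb n) <= val (sb n.+1))%O.
Hypothesis val_AB : forall m n, (val (sa m) `&` val (sb n) <= val sc)%O.
Hypothesis val_CB : forall n, (val sc `&` val (sb n) <= val (sa n.+1))%O.
Hypothesis val_CA : forall m, (val sc `&` val (sa m) <= val (sb m.+1))%O.

Definition val_ideal (p : K * L) : Prop := forall s, Kset p.1 s -> (p.2 <= val s)%O.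

Lemma val_ideal_biideal : biideal val_ideal.
Proof.
split=> //.
- by move=> p q Iq le_pq le_b s /le_pq /Iq; apply: le_trans le_b.
- by move=> k s _; apply: le0x.
- by move=> k b0 b1 I0 I1 s ks; rewrite leUx I0 ?I1.
move=> k0 k1 b I0 I1; apply: Kset_join_sub I0 I1 => [m|n|m n|n|m] /=.
- by move/le_trans; apply.
- by move/le_trans; apply.
- by move=> bm bn; apply: le_trans (val_AB m n); rewrite lexI bm bn.
- by move=> bc bn; apply: le_trans (val_CB n); rewrite lexI bc bn.
- by move=> bc bm; apply: le_trans (val_CA m); rewrite lexI bc bm.
Qed.

Definition Kval (k : K) : L :=
  match k with
  | K0 => \bot
  | KC => val sc
  | KA m => val (sa m)
  | KB n => val (sb n)
  | KT0 m => val sc `&` val (sa m) `&` val (sb m)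
  | KTA m => val sc `&` val (sa m) `&` val (sb m.+1)
  | KTB n => val sc `&` val (sa n.+1) `&` val (sb n)
  end%O.

Lemma val_sa_mono m p : m <= p -> (val (sa m) <= val (sa p))%O.
Proof. exact: Order.NatMonotonyTheory.nondecnP (fun n => val (sa n)) val_succA m p. Qed.

Lemma val_sb_mono m p : m <= p -> (val (sb m) <= val (sb p))%O.
Proof. exact: Order.NatMonotonyTheory.nondecnP (fun n => val (sb n)) val_succB m p. Qed.

Lemma val_ideal_Kval k : val_ideal (k, Kval k).
Proof.
move=> s; rewrite Kset_desc.
case: k => [||m|m|m|m|m]; case: s => [|p|p] //= le_p;
  first [ exact: lexx | exact: val_sa_mono le_p | exact: val_sb_mono le_p
        | by do 2 apply: leIxl | by apply: leIxl; apply: leIxr; apply: val_sa_mono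
        | by apply: leIxr; apply: val_sb_mono ].
Qed.

Lemma le_Kval k b : k <> K0 -> val_ideal (k, b) -> (b <= Kval k)%O.
Proof.
move=> k0 bk; have {bk} bks s : desc_set (Kdec k) s -> (b <= val s)%O by rewrite -Kset_desc; apply: bk.
by case: k k0 bks => [||m|m|m|m|m] // _ bks /=; rewrite ?lexI !bks /=.
Qed.

Variable M : nat.
Hypothesis val_stable : forall p, M <= p -> val (sa p) = val (sa M) /\ val (sb p) = val (sb M).

Lemma val_minn p : [/\ val (sa (minn p M)) = val (sa p), val (sb (minn p M)) = val (sb p),
  val (sa (minn p M).+1) = val (sa p.+1) & val (sb (minn p M).+1) = val (sb p.+1)].
Proof.
case: (leqP p M) => [//|lt_Mp].
have [-> ->] := val_stable (ltnW lt_Mp); have [-> ->] := val_stable (leqnSn M).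
by have [-> ->] := val_stable (leqW (ltnW lt_Mp)).
Qed.

Lemma Kval_clamp k : Kval (Kclamp M k) = Kval k.
Proof.
by case: k => [||m|m|m|m|m] //=; have [eA eB eA' eB'] := val_minn m; rewrite ?eA ?eB ?eA' ?eB'.
Qed.

Lemma capped_val_ideal : capped Kle K0 leL \bot%O val_ideal.
Proof.
exists (List.map (fun k => (k, Kval k)) (Klist M)) => -[k b]; split=> [bk|[[k' b'] [Gq [le_k le_b]]]].
  have [->|k0] : k = K0 \/ k <> K0 by case: k {bk}; [left | right..].
    by exists (K0, b); split; [right; right | split; [apply: Kle_refl | apply: lexx]].
  exists (Kclamp M k, Kval k); split; last by split; [apply: Kle_clamp | apply: le_Kval].
  by left; rewrite -Kval_clamp; apply: (List.in_map (fun k => (k, Kval k))); apply: In_clamp.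
suff bk' : val_ideal (k', b') by move=> s /le_k /bk' /=; apply: le_trans le_b.
case: Gq => [/List.in_map_iff[k'' [[<- <-] _]]|[/= ->|/= ->] s] //; first exact: val_ideal_Kval.
by move=> _; apply: le0x.
Qed.

End Valuation.

Section BiIdealOfK.
Variable I : K * L -> Prop.
Hypothesis I_biideal : biideal I.

Lemma I_down k k' b b' : I (k, b) -> Kle k' k -> (b' <= b)%O -> I (k', b').
Proof. by case: I_biideal => down *; apply: (down (k', b') (k, b)). Qed.

Lemma I_K0 b : I (K0, b).
Proof. by case: I_biideal. Qed.

Lemma I_bot k : I (k, \bot%O).
Proof. by case: I_biideal. Qed.

Lemma I_joinL k b b' : I (k, b) -> I (k, b') -> I (k, b `|` b')%O.
Proof. by case: I_biideal => _ _ _ joinL _; apply: joinL. Qed.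

Lemma I_joinK k1 k2 b : I (k1, b) -> I (k2, b) -> I (Kjoin k1 k2, b).
Proof. by case: I_biideal => _ _ _ _ joinK; apply: joinK. Qed.

Lemma I_step k k' k1 k2 x y z : I (k, x) -> I (k1, y) -> I (k2, z) ->
  Kle k' k -> Kle k' (Kjoin k1 k2) -> I (k', x `|` y `&` z)%O.
Proof.
move=> Ix Iy Iz le_k le_k12; apply: I_joinL; first exact: I_down Ix le_k (lexx _).
have Iyz := I_joinK (I_down Iy (Kle_refl _) (leIl y z)) (I_down Iz (Kle_refl _) (leIr z y)).
exact: I_down Iyz le_k12 (lexx _).
Qed.

Lemma I_of_symbols k b : (forall s, Kset k s -> I (Ksym s, b)) -> I (k, b).
Proof.
have [-> _|/Kle_join3[s1 [s2 [s3 [k1 k2 k3 le_k]]]] Ik] : k = K0 \/ k <> K0.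
- by case: k; [left | right..].
- exact: I_K0.
- exact: I_down (I_joinK (Ik _ k1) (I_joinK (Ik _ k2) (Ik _ k3))) le_k (lexx b).
Qed.

Definition Itriple (u : L * L * L) : Prop :=
  [/\ exists m, I (KA m, u.1.1), exists n, I (KB n, u.1.2) & I (KC, u.2)].

Lemma Itriple_hstep u :
  Itriple u -> Itriple (hstep (@Order.meet disp L) (@Order.join disp L) u).
Proof.
case: u => [[x y] z] [[m Ix] [n Iy] Iz]; split=> /=.
- exists (maxn m n.+1); apply: I_step Ix Iy Iz _ _; [apply: KA_le_KA | apply: KA_le_KB_KC]; lia.
- exists (maxn n m.+1); apply: I_step Iy Ix Iz _ _; [apply: KB_le_KB | apply: KB_le_KA_KC]; lia.
- exact: I_step Iz Ix Iy (Kle_refl _) (KC_le_KA_KB _ _).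
Qed.

Variable P : list (K * L).
Hypothesis P_I : forall p, In p P -> I p.
Hypothesis I_gen :
  forall p, I p -> bigen Kle Kjoin K0 leL (@Order.join disp L) \bot%O (fun q => In q P) p.
Variable N : nat.
Hypothesis P_index : forall p, In p P -> Kindex p.1 <= N.
Variable h : nat.
Hypothesis L_hmodular : hmodular (@Order.meet disp L) (@Order.join disp L) h.
Local Notation hstep := (hstep (@Order.meet disp L) (@Order.join disp L)).
Local Notation hiter := (hiter (@Order.meet disp L) (@Order.join disp L)).

Definition Pjoin (s : Sym) : L := (\join_(p <- P | Kset p.1 s) p.2)%O.

Lemma Pjoin_I s : I (Ksym s, Pjoin s).
Proof.
rewrite /Pjoin; elim: P P_I => [|[a b] Q IH] QI; first by rewrite big_nil; apply: I_bot.
rewrite big_cons /=; have IQ := IH (fun p Qp => QI p (or_intror Qp)).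
case: ifP => // a_s; apply: I_joinL IQ => //.
exact: I_down (QI _ (or_introl erefl)) (Ksym_le a_s) (lexx b).
Qed.

Lemma le_Pjoin a b s : In (a, b) P -> Kset a s -> (b <= Pjoin s)%O.
Proof.
rewrite /Pjoin; elim: P => [|[a' b'] Q IH] //= [[<- <-] a_s|Qab a_s]; rewrite big_cons /=.
  by rewrite a_s leUl.
by case: ifP => _; [apply: lexUr|]; apply: IH.
Qed.

Lemma Pjoin_le s u : (forall a b, In (a, b) P -> Kset a s -> (b <= u)%O) -> (Pjoin s <= u)%O.
Proof.
rewrite /Pjoin; elim: P => [|[a b] Q IH] bnd; first by rewrite big_nil le0x.
rewrite big_cons /=; have Qbnd := IH (fun a' b' Qab => bnd a' b' (or_intror Qab)).
by case: ifP => // a_s; rewrite leUx Qbnd (bnd a b) //; left.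
Qed.

Lemma Pjoin_le_N p : (Pjoin (sa p) <= Pjoin (sa N))%O /\ (Pjoin (sb p) <= Pjoin (sb N))%O.
Proof.
split; apply: Pjoin_le => a b Pab.
- by move/(Kset_index_sa (P_index Pab)); apply: le_Pjoin Pab.
- by move/(Kset_index_sb (P_index Pab)); apply: le_Pjoin Pab.
Qed.

Definition seed : L * L * L := (Pjoin (sa N), Pjoin (sb N), Pjoin sc).

Definition cval : L := (hiter h seed).2.

Lemma hiter_seed_fixed :
  [/\ (hiter h seed).1.2 `&` cval <= (hiter h seed).1.1,
      (hiter h seed).1.1 `&` cval <= (hiter h seed).1.2 &
      (hiter h seed).1.1 `&` (hiter h seed).1.2 <= cval]%O.
Proof.
have := L_hmodular seed; rewrite hiterS /cval.
by case: (hiter h seed) => [[x y] z]; apply: hstep_fixed.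
Qed.

Lemma cval_I : I (KC, cval).
Proof.
suff [_ _] : Itriple (hiter h seed) by [].
elim: h => [|k IHk]; last exact: Itriple_hstep.
by split; [exists N; apply: (Pjoin_I (sa N)) | exists N; apply: (Pjoin_I (sb N)) | apply: (Pjoin_I sc)].
Qed.

Fixpoint abval (n : nat) : L * L :=
  if n is n'.+1 then
    ((abval n').1 `|` (abval n').2 `&` cval `|` Pjoin (sa n),
     (abval n').2 `|` (abval n').1 `&` cval `|` Pjoin (sb n))%O
  else (Pjoin (sa 0), Pjoin (sb 0)).

Definition Ival (s : Sym) : L :=
  match s with sc => cval | sa n => (abval n).1 | sb n => (abval n).2 end.

Lemma Ival_saS n : Ival (sa n.+1) = (Ival (sa n) `|` Ival (sb n) `&` cval `|` Pjoin (sa n.+1))%O.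
Proof. by []. Qed.

Lemma Ival_sbS n : Ival (sb n.+1) = (Ival (sb n) `|` Ival (sa n) `&` cval `|` Pjoin (sb n.+1))%O.
Proof. by []. Qed.

Lemma Ival_succA n : (Ival (sa n) <= Ival (sa n.+1))%O.
Proof. by rewrite Ival_saS -joinA leUl. Qed.

Lemma Ival_succB n : (Ival (sb n) <= Ival (sb n.+1))%O.
Proof. by rewrite Ival_sbS -joinA leUl. Qed.

Lemma Ival_CB n : (Ival sc `&` Ival (sb n) <= Ival (sa n.+1))%O.
Proof. by rewrite Ival_saS meetC; apply/lexUl/lexUr. Qed.

Lemma Ival_CA m : (Ival sc `&` Ival (sa m) <= Ival (sb m.+1))%O.
Proof. by rewrite Ival_sbS meetC; apply/lexUl/lexUr. Qed.

Lemma Pjoin_le_Ival s : (Pjoin s <= Ival s)%O.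
Proof.
case: s => [|[|n]|[|n]] //=; rewrite ?leUr //.
by have [] := hiter_ge h seed.
Qed.

Lemma Ival_I s : I (Ksym s, Ival s).
Proof.
suff Iab n : I (KA n, Ival (sa n)) /\ I (KB n, Ival (sb n)).
  by case: s => [|n|n]; [apply: cval_I | apply: (Iab n).1 | apply: (Iab n).2].
elim: n => [|n [IA IB]]; first by split; [apply: (Pjoin_I (sa 0)) | apply: (Pjoin_I (sb 0))].
rewrite Ival_saS Ival_sbS; split; apply: I_joinL.
- by apply: I_step IA IB cval_I _ _; [apply: KA_le_KA | apply: KA_le_KB_KC].
- exact: (Pjoin_I (sa n.+1)).
- by apply: I_step IB IA cval_I _ _; [apply: KB_le_KB | apply: KB_le_KA_KC].
- exact: (Pjoin_I (sb n.+1)).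
Qed.

Lemma Ival_le_fixed n :
  (Ival (sa n) <= (hiter h seed).1.1)%O /\ (Ival (sb n) <= (hiter h seed).1.2)%O.
Proof.
have [seedX seedY _] := hiter_ge h seed; have [fixX fixY _] := hiter_seed_fixed.
have [PA PB] := (fun p => le_trans (Pjoin_le_N p).1 seedX, fun p => le_trans (Pjoin_le_N p).2 seedY).
elim: n => [|n [IHA IHB]]; first by split; [apply: PA | apply: PB].
rewrite Ival_saS Ival_sbS !leUx IHA IHB PA PB !andbT /=; split.
- exact: le_trans (leI2 IHB (lexx _)) fixX.
- exact: le_trans (leI2 IHA (lexx _)) fixY.
Qed.

Lemma Ival_AB m n : (Ival (sa m) `&` Ival (sb n) <= Ival sc)%O.
Proof.
have [_ _ fixZ] := hiter_seed_fixed.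
exact: le_trans (leI2 (Ival_le_fixed m).1 (Ival_le_fixed n).2) fixZ.
Qed.

Lemma Ival_hstep n : N <= n ->
  hstep (Ival (sa n), Ival (sb n), cval) = (Ival (sa n.+1), Ival (sb n.+1), cval).
Proof.
move=> le_Nn; rewrite hstepE Ival_saS Ival_sbS.
have absorbA : (Pjoin (sa n.+1) <= Ival (sa n))%O.
  exact: le_trans (Pjoin_le_N _).1 (le_trans (Pjoin_le_Ival _) (val_sa_mono Ival_succA le_Nn)).
have absorbB : (Pjoin (sb n.+1) <= Ival (sb n))%O.
  exact: le_trans (Pjoin_le_N _).2 (le_trans (Pjoin_le_Ival _) (val_sb_mono Ival_succB le_Nn)).
by congr (_, _, _); [symmetry; apply/join_l/lexUl | symmetry; apply/join_l/lexUl
  | apply/join_l/Ival_AB].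
Qed.

Lemma Ival_hiter k :
  hiter k (Ival (sa N), Ival (sb N), cval) = (Ival (sa (N + k)), Ival (sb (N + k)), cval).
Proof. by elim: k => [|k IHk]; rewrite ?addn0 // hiterS IHk Ival_hstep ?addnS //; lia. Qed.

Lemma Ival_stable p : N + h <= p ->
  Ival (sa p) = Ival (sa (N + h)) /\ Ival (sb p) = Ival (sb (N + h)).
Proof.
move=> le_p; have := hiter_hmodular (p - (N + h)) (Ival (sa N), Ival (sb N), cval) L_hmodular.
by rewrite !Ival_hiter addnA subnKC // => -[eA eB].
Qed.

Lemma Ival_ideal_I p : val_ideal Ival p -> I p.
Proof.
case: p => k b /= bk; apply: I_of_symbols => s /bk le_b.
exact: I_down (Ival_I s) (Kle_refl _) le_b.
Qed.

Lemma P_Ival_ideal p : In p P -> val_ideal Ival p.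
Proof. by case: p => a b Pab s a_s; apply: le_trans (le_Pjoin Pab a_s) (Pjoin_le_Ival s). Qed.

Lemma I_capped : capped Kle K0 leL \bot%O I.
Proof.
have Ival_biideal := val_ideal_biideal Ival_succA Ival_succB Ival_AB Ival_CB Ival_CA.
have [Gamma Gamma_caps] := capped_val_ideal Ival_succA Ival_succB Ival_stable.
exists Gamma => p; rewrite -Gamma_caps; split=> [Ip|/Ival_ideal_I //].
exact: I_gen Ip _ Ival_biideal P_Ival_ideal.
Qed.

End BiIdealOfK.
End KTensor.

Theorem theorem5p13 :
  [/\ infinite_type K,
      generated_by_three Kmeet Kjoin,
      hmodular Kmeet Kjoin 2 &
      forall h : nat, 0 < h ->
        forall (d : Order.disp_t) (L : bLatticeType d),
          hmodular (@Order.meet d L) (@Order.join d L) h ->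
          capped_tensor Kle Kjoin K0
            (fun x y : L => is_true (x <= y)%O) (@Order.join d L) (\bot)%O].
Proof.
split; [exact: K_infinite | exact: K_generated_by_three | exact: K_2modular |].
(* The argument does not need [0 < h]. *)
move=> h _ d L L_hmodular I I_compact.
have [P [P_I I_gen]] := compact_biideal_fg I_compact.
have [N P_index] := In_ub (fun p : K * L => Kindex p.1) P.
exact (I_capped (proj1 I_compact) P_I I_gen P_index L_hmodular).
Qed.
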